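(* Let $P$ be a finite atomic lattice that is ranked and whose Hasse diagram is a uniform layered graph. If $Q$ is a finite ranked poset with unique minimal element such that $Q\sim_BP$, then $Q_{\ge2}\cong P_{\ge2}$; that is, $P_{\ge2}$ is determined up to isomorphism by the doubly graded algebra $B(P)$.
   Context: A lattice is atomic if every element is a join of atoms (elements covering the minimum $\hat0$). A ranked poset has a rank function with $|x|=|y|+1$ whenever $x$ covers $y$ and $|x|=0$ iff $x$ is minimal; its Hasse diagram is the layered graph with layers $P_i=\{p:|p|=i\}$ and edges $(p,q)$ for coverings $p\gtrdot q$; $S(p)$ is the set of elements covered by $p$; $P_{\ge j}=\bigcup_{i\ge j}P_i$. The Hasse diagram is uniform if for every $p$ of rank $\ge2$ the elements of $S(p)$ form a single class under the transitive closure of $x\approx y$ iff $S(x)\cap S(y)\neq\emptyset$. For a layered graph with vertex set $V=\bigsqcup V_i$, $V_+=\bigsqcup_{i\ge1}V_i$, $B(\Gamma)=T(V_+)/R_B$ over a field $\mathbb F$, where $R_B$ is generated by $\{vw: v,w\in V_+,(v,w)\notin E\}\cup\{v\sum_{w\in S(v)}w: |v|\ge2\}$, doubly graded with $v_1\cdots v_m$ in bidegree $(m,\sum|v_i|)$. $Q\sim_BP$ means there is a doubly graded algebra isomorphism $B(P)\to B(Q)$. *)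

From HB Require Import structures.
From mathcomp Require Import all_boot all_order all_algebra.
Set Implicit Arguments. Unset Strict Implicit. Unset Printing Implicit Defensive.
Import Order.Theory GRing.Theory.

Local Open Scope order_scope.

Section PosetDefs.
Context {d : Order.disp_t} {T : finPOrderType d}.

Definition covers (x y : T) : bool :=
  (y < x) && [forall z : T, ~~ ((y < z) && (z < x))].

Definition minimal (x : T) : Prop := forall y : T, y <= x -> y = x.

Definition is_rank (r : T -> nat) : Prop :=
  (forall x y : T, covers x y -> r x = (r y).+1) /\
  (forall x : T, r x = 0%N <-> minimal x).

Definition unique_minimal : Prop :=
  exists x0 : T, forall x : T, minimal x <-> x = x0.

Definition Sset (p : T) : {set T} := [set q | covers p q].

Definition uniform (r : T -> nat) : Prop :=
  forall p : T, (2 <= r p)%N ->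
    forall x y : T, x \in Sset p -> y \in Sset p ->
      connect (fun a b : T => [&& a \in Sset p, b \in Sset p &
                                  (Sset a :&: Sset b != set0)]) x y.

End PosetDefs.

Definition atom {d : Order.disp_t} {L : finTBLatticeType d} (a : L) : bool :=
  covers a \bot.

Definition atomic {d : Order.disp_t} (L : finTBLatticeType d) : Prop :=
  forall x : L, x = \join_(a : L | atom a && (a <= x)) a.

Definition ge2_iso {dP dQ : Order.disp_t} (P : finPOrderType dP) (rP : P -> nat)
    (Q : finPOrderType dQ) (rQ : Q -> nat) : Prop :=
  exists f : {x : P | (2 <= rP x)%N} -> {y : Q | (2 <= rQ y)%N},
    bijective f /\ forall x y, (val x <= val y) = (val (f x) <= val (f y)).

Local Close Scope order_scope.
Local Open Scope ring_scope.

(* Tensor algebra T(X) over a field, realised on functions on words     *)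
Section TensorAlg.
Variable F : fieldType.
Variable X : finType.

Definition mono (u : seq X) : seq X -> F := fun s => (s == u)%:R.

Definition ncmul (f g : seq X -> F) : seq X -> F :=
  fun s => \sum_(i < (size s).+1) f (take i s) * g (drop i s).

Inductive ideal (Rel : (seq X -> F) -> Prop) : (seq X -> F) -> Prop :=
| ideal0 : ideal Rel (fun _ => 0)
| idealD f g : ideal Rel f -> ideal Rel g -> ideal Rel (fun s => f s + g s)
| idealZ (c : F) f : ideal Rel f -> ideal Rel (fun s => c * f s)
| idealG (u w : seq X) r : Rel r -> ideal Rel (ncmul (mono u) (ncmul r (mono w)))
| idealE f g : (forall s, f s = g s) -> ideal Rel f -> ideal Rel g.

(* elements of T(X) written as finite formal linear combinations of words *)
Definition fpoly := seq (F * seq X).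
Definition fval (p : fpoly) : seq X -> F :=
  fun s => \sum_(cw <- p) cw.1 * mono cw.2 s.

End TensorAlg.

Section Hom.
Variable F : fieldType.
Variables X Y : finType.
Variable phi : X -> seq Y -> F.

Definition homw (u : seq X) : seq Y -> F :=
  foldr (fun x acc => ncmul (phi x) acc) (mono F [::]) u.

Definition homp (p : fpoly F X) : seq Y -> F :=
  fun t => \sum_(cw <- p) cw.1 * homw cw.2 t.
End Hom.

(* B(Γ) for a layered graph with generator set X = V_+, edges E on V_+,  *)
(* and rank rk; relations  vw ((v,w) not an edge)  and  v Σ_{w∈S(v)} w  *)
(* (|v| >= 2; then S(v) ⊆ V_+).                                          *)
Definition BRel (F : fieldType) (X : finType) (E : rel X) (rk : X -> nat)
    (r : seq X -> F) : Prop :=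
  (exists v w : X, ~~ E v w /\ forall s, r s = mono F [:: v; w] s) \/
  (exists v : X, (2 <= rk v)%N /\
     forall s, r s = \sum_(w : X | E v w) mono F [:: v; w] s).

(* Since B is generated in degree 1 and the relations are in degree 2, a
   doubly graded algebra morphism is the same as an algebra morphism of
   T(X) -> T(Y) determined by images phi x of generators lying in
   T_{1,rk x}(Y), which maps the ideal into the ideal; it is an isomorphism
   iff the induced map on quotients is injective and surjective. *)
Definition graded_iso (F : fieldType) (X : finType) (E : rel X) (rk : X -> nat)
    (Y : finType) (E' : rel Y) (rk' : Y -> nat) (phi : X -> seq Y -> F) : Prop :=
  [/\ (forall (x : X) (t : seq Y), phi x t != 0 ->
          exists y : Y, t = [:: y] /\ rk' y = rk x),
      (forall p : fpoly F X, ideal (BRel E rk) (fval p) ->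
          ideal (BRel E' rk') (homp phi p)),
      (forall p : fpoly F X, ideal (BRel E' rk') (homp phi p) ->
          ideal (BRel E rk) (fval p)) &
      (forall q : fpoly F Y, exists p : fpoly F X,
          ideal (BRel E' rk') (fun t => fval q t - homp phi p t))].

Definition Vplus {d : Order.disp_t} (P : finPOrderType d) (r : P -> nat) : finType :=
  {x : P | (0 < r x)%N}.

Definition hasseE {d : Order.disp_t} (P : finPOrderType d) (r : P -> nat) :
  rel (Vplus r) := fun v w => covers (val v) (val w).

Definition hasseRk {d : Order.disp_t} (P : finPOrderType d) (r : P -> nat) :
  Vplus r -> nat := fun v => r (val v).

Arguments hasseE {d P} r _ _.
Arguments hasseRk {d P} r _.

Definition simB (F : fieldType) {dQ dP : Order.disp_t}
    (Q : finPOrderType dQ) (rQ : Q -> nat) (P : finPOrderType dP) (rP : P -> nat) : Prop :=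
  exists phi : Vplus rP -> seq (Vplus rQ) -> F,
    @graded_iso F (Vplus rP) (hasseE rP) (hasseRk rP) (Vplus rQ) (hasseE rQ) (hasseRk rQ) phi.

(* The degree-one part of a doubly graded isomorphism B(P) -> B(Q) is an
   invertible, rank-preserving matrix [coef1] between the generators, and the
   isomorphism maps the quadratic relations of B(P) onto those of B(Q).  A
   quadratic element lies in the ideal iff each of its rows [v _] is constant
   on the elements covered by v (and vanishes there when |v| < 2); for a
   product of linear forms a b this only concerns the rows where a does not
   vanish, and the condition is transported along the matrix.  In an atomic
   lattice an element of rank >= 2 covers at least two elements, and two
   distinct elements are covered together only by their join.  Testing the
   products v w with w not covered by v then shows that the row of each v of
   rank >= 2 has a single nonzero entry, and that the resulting bijection
   between the elements of rank >= 2 preserves and reflects coverings, hence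
   is an isomorphism P_{>=2} ~ Q_{>=2}. *)

From HB Require Import structures.
From mathcomp Require Import all_boot all_order all_algebra.
From mathcomp Require Import zify.
Set Implicit Arguments. Unset Strict Implicit. Unset Printing Implicit Defensive.
Import Order.Theory GRing.Theory.

Local Open Scope ring_scope.

Section Delta.
Variables (F : fieldType) (Z : finType).

Definition delta (z t : Z) : F := (t == z)%:R.

Lemma delta_id z : delta z z = 1.
Proof. by rewrite /delta eqxx. Qed.

Lemma delta_neq z t : t != z -> delta z t = 0.
Proof. by rewrite /delta => /negbTE ->. Qed.

Lemma sum_mul_delta (c : Z -> F) z : \sum_t c t * delta z t = c z.
Proof.
rewrite (bigD1 z) //= delta_id mulr1 big1 ?addr0 // => t /delta_neq ->.
exact: mulr0.
Qed.

End Delta.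

Arguments delta {F Z} z t.
Arguments delta_id {F Z z}.
Arguments delta_neq {F Z z t}.
Arguments sum_mul_delta {F Z} c z.

Section TensorAlgebra.
Variables (F : fieldType) (X : finType).
Implicit Types (f g : seq X -> F) (u s : seq X).

Definition homog n f := forall s, size s != n -> f s = 0.

Lemma eq_ncmul f f' g g' : f =1 f' -> g =1 g' -> ncmul f g =1 ncmul f' g'.
Proof. by move=> ef eg s; apply: eq_bigr => i _; rewrite ef eg. Qed.

Lemma homog_mono u : homog (size u) (mono F u).
Proof. by move=> s; apply: contraNeq => /eqP; rewrite /mono; case: eqP => // ->. Qed.

Lemma homog_ncmul m n f g : homog m f -> homog n g -> homog (m + n) (ncmul f g).
Proof.
move=> hf hg s hs; rewrite /ncmul big1 // => i _.
have [hm|hm] := eqVneq (size (take i s)) m; last by rewrite hf ?mul0r.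
rewrite hg ?mulr0 // size_drop; move: hm hs; rewrite size_take.
by have := ltn_ord i; case: ifP; lia.
Qed.

Lemma ncmul1l g : ncmul (mono F [::]) g =1 g.
Proof.
move=> s; rewrite /ncmul big_ord_recl take0 drop0 /mono eqxx mul1r big1 ?addr0 //.
by case: s => [|x s] i _; [case: i | rewrite /= mul0r].
Qed.

Lemma ncmul1r g : ncmul g (mono F [::]) =1 g.
Proof.
move=> s; rewrite /ncmul big_ord_recr /= take_size drop_size /mono eqxx mulr1.
rewrite big1 ?add0r // => i _.
by rewrite -size_eq0 size_drop subn_eq0 leqNgt ltn_ord mulr0.
Qed.

Lemma mono2 (v w v' w' : X) :
  mono F [:: v; w] [:: v'; w'] = ((v' == v) && (w' == w))%:R.
Proof. by rewrite /mono !eqseq_cons andbT. Qed.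

End TensorAlgebra.

Arguments homog_mono {F X} u.

Section Relations.
Variables (F : fieldType) (X : finType) (E : rel X) (rk : X -> nat).
Implicit Types (f g r : seq X -> F) (a b : X -> F) (v w : X).

(* [b], read as the coefficients of the words [v w], lies in the span of the
   defining relations of B beginning with [v]. *)
Definition rel_row v b : Prop :=
  (forall w w', E v w -> E v w' -> b w = b w') /\
  ((rk v < 2)%N -> forall w, E v w -> b w = 0).

Definition rel_quad f := forall v, rel_row v (fun w => f [:: v; w]).

Definition tens a b (s : seq X) : F := if s is [:: v; w] then a v * b w else 0.

Lemma eq_rel_row v b b' : b =1 b' -> rel_row v b -> rel_row v b'.
Proof. by move=> eb [hc hz]; split=> [w w'|hv w]; rewrite -!eb; [apply: hc|apply: hz]. Qed.

Lemma rel_row_out v b : (forall w, E v w -> b w = 0) -> rel_row v b.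
Proof. by move=> h; split=> [w w' /h -> /h ->|]. Qed.

Lemma rel_rowD v b b' : rel_row v b -> rel_row v b' -> rel_row v (fun w => b w + b' w).
Proof.
move=> [c1 z1] [c2 z2]; split=> [w w' e e'|hv w e]; first by rewrite (c1 _ _ e e') (c2 _ _ e e').
by rewrite z1 ?z2 ?addr0.
Qed.

Lemma rel_rowZ v c b : rel_row v b -> rel_row v (fun w => c * b w).
Proof.
by move=> [hc hz]; split=> [w w' e e'|hv w e]; [rewrite (hc _ _ e e') | rewrite hz ?mulr0].
Qed.

Lemma rel_rowZP v c b : c != 0 -> rel_row v (fun w => c * b w) <-> rel_row v b.
Proof.
move=> c0; split=> [h|]; last exact: rel_rowZ.
by apply: eq_rel_row (rel_rowZ c^-1 h) => w; rewrite mulKf.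
Qed.

Lemma eq_rel_quad f g : f =1 g -> rel_quad f -> rel_quad g.
Proof. by move=> e h v; apply: eq_rel_row (h v) => w; apply: e. Qed.

Lemma rel_quad_tens a b : rel_quad (tens a b) <-> forall v, a v != 0 -> rel_row v b.
Proof.
split=> [h v av|h v]; first exact/(rel_rowZP _ _ av)/h.
have [a0|av] := eqVneq (a v) 0; last exact/(rel_rowZP _ _ av)/h.
by apply: rel_row_out => w _; rewrite /= a0 mul0r.
Qed.

Lemma homog_tens a b : homog 2 (tens a b).
Proof. by case=> [|v [|w [|]]]. Qed.

Lemma BRel_homog r : BRel E rk r -> homog 2 r.
Proof.
case=> [[v [w [_ hr]]]|[v [_ hr]]] s hs; rewrite hr; first exact: homog_mono.
by rewrite big1 // => w _; apply: homog_mono.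
Qed.

Lemma BRel_rel_quad r : BRel E rk r -> rel_quad r.
Proof.
case=> [[v0 [w0 [nE hr]]]|[v0 [hv0 hr]]] v.
  apply: rel_row_out => w e; rewrite hr mono2.
  by case: eqP => [ev|]; case: eqP => [ew|] //; subst; rewrite e in nE.
have row w : r [:: v; w] = ((v == v0) && E v0 w)%:R.
  rewrite hr; case: eqP => [->|nv] /=; last first.
    by rewrite big1 // => w' _; rewrite mono2; case: eqP.
  have [e|ne] := boolP (E v0 w).
    rewrite (bigD1 w) //= mono2 !eqxx big1 ?addr0 // => w' /andP[_ nw].
    by rewrite mono2 eqxx eq_sym (negbTE nw).
  rewrite big1 // => w' e'; rewrite mono2 eqxx /=; case: eqP => // ew.
  by rewrite ew e' in ne.
split=> [w w' e e'|hv w e]; rewrite !row.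
  by case: eqP => //= ev; subst; rewrite e e'.
by case: eqP => //= ev; subst; lia.
Qed.

Lemma ideal_BRel_low_quad f :
  ideal (BRel E rk) f -> (forall s, (size s < 2)%N -> f s = 0) /\ rel_quad f.
Proof.
elim=> {f} [|f g _ [lf qf] _ [lg qg]|c f _ [lf qf]|u w r hr|f g efg _ [lf qf]].
- by split=> [//|v]; apply: rel_row_out.
- by split=> [s hs|v]; [rewrite lf ?lg ?addr0 | apply: rel_rowD].
- by split=> [s hs|v]; [rewrite lf ?mulr0 | apply: rel_rowZ].
- have [uw0|uw] := eqVneq (size u + size w)%N 0%N.
    move/eqP: uw0; rewrite addn_eq0 !size_eq0 => /andP[/eqP-> /eqP->].
    have er s : r s = ncmul (mono F [::]) (ncmul r (mono F [::])) s.
      by rewrite ncmul1l ncmul1r.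
    split=> [s hs|]; last exact: eq_rel_quad er (BRel_rel_quad hr).
    by rewrite -er BRel_homog // neq_ltn hs.
  have h0 s : (size s <= 2)%N -> ncmul (mono F u) (ncmul r (mono F w)) s = 0.
    move=> hs; have := homog_ncmul (homog_mono u) (homog_ncmul (BRel_homog hr) (homog_mono w)).
    by apply; move: uw; lia.
  by split=> [s /ltnW/h0 //|v]; apply: rel_row_out => w' _; apply: h0.
- by split=> [s hs|]; [rewrite -efg lf | apply: eq_rel_quad efg qf].
Qed.

Lemma ideal_sum (I : Type) (s : seq I) (P : pred I) (G : I -> seq X -> F) :
  (forall i, P i -> ideal (BRel E rk) (G i)) ->
  ideal (BRel E rk) (fun t => \sum_(i <- s | P i) G i t).
Proof.
move=> h; elim: s => [|i s IH].
  by apply: idealE (ideal0 _) => t; rewrite big_nil.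
have [Pi|nPi] := boolP (P i).
  by apply: idealE (idealD (h i Pi) IH) => t; rewrite big_cons Pi.
by apply: idealE IH => t; rewrite big_cons (negbTE nPi).
Qed.

Lemma ideal_BRel r : BRel E rk r -> ideal (BRel E rk) r.
Proof.
move=> hr; apply: idealE (idealG [::] [::] hr) => s.
by rewrite ncmul1l ncmul1r.
Qed.

Lemma ideal_rel_row v b :
  rel_row v b -> ideal (BRel E rk) (fun s => \sum_w b w * mono F [:: v; w] s).
Proof.
move=> [hc hz].
have non_edges : ideal (BRel E rk) (fun s => \sum_(w | ~~ E v w) b w * mono F [:: v; w] s).
  apply: ideal_sum => w nE; apply/idealZ/ideal_BRel; left.
  by exists v, w.
have edges : ideal (BRel E rk) (fun s => \sum_(w | E v w) b w * mono F [:: v; w] s).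
  have [lo|hi] := ltnP (rk v) 2.
    by apply: idealE (ideal0 _) => s; rewrite big1 // => w e; rewrite hz ?mul0r.
  have [c hcb] : exists c, forall w, E v w -> b w = c.
    case: (pickP (E v)) => [w0 e0|none]; first by exists (b w0) => w e; apply: hc.
    by exists 0 => w; rewrite none.
  apply: idealE (idealZ c (ideal_BRel _)) => [s|]; last by right; exists v.
  by rewrite mulr_sumr; apply: eq_bigr => w e; rewrite hcb.
by apply: idealE (idealD non_edges edges) => s; rewrite [RHS](bigID (E v)) addrC.
Qed.

Lemma homog2_expand f :
  homog 2 f -> f =1 fun s => \sum_v \sum_w f [:: v; w] * mono F [:: v; w] s.
Proof.
move=> hf s; have [hs|hs] := eqVneq (size s) 2%N; last first.
  rewrite hf // big1 // => v _; rewrite big1 // => w _.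
  by rewrite homog_mono ?mulr0.
case: s hs => [|a [|b []]] // _; rewrite (bigD1 a) //= [X in _ + X]big1 ?addr0 => [|v nv].
  rewrite (bigD1 b) //= mono2 !eqxx mulr1 big1 ?addr0 // => w nw.
  by rewrite mono2 eqxx eq_sym (negbTE nw) mulr0.
by rewrite big1 // => w _; rewrite mono2 eq_sym (negbTE nv) mulr0.
Qed.

Lemma rel_quad_ideal f : homog 2 f -> rel_quad f -> ideal (BRel E rk) f.
Proof.
move=> hf qf; apply: idealE (ideal_sum _ (fun v _ => ideal_rel_row (qf v))) => s.
exact/esym/homog2_expand.
Qed.

End Relations.

Section DegreeOne.
Variables (F : fieldType) (X Y : finType).
Variables (EX : rel X) (rkX : X -> nat) (EY : rel Y) (rkY : Y -> nat).
Variable phi : X -> seq Y -> F.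
Hypothesis GI : graded_iso EX rkX EY rkY phi.
Implicit Types (a b : X -> F) (x : X) (y : Y).

Definition coef1 x y := phi x [:: y].
Definition lin1 a y := \sum_x a x * coef1 x y.

Lemma homog_phi x : homog 1 (phi x).
Proof. by case: GI => h _ _ _ t; apply: contraNeq => /h [y [-> _]]. Qed.

Lemma coef1_rank x y : coef1 x y != 0 -> rkY y = rkX x.
Proof. by case: GI => h _ _ _ /h [y' [[->] ->]]. Qed.

Lemma homog_homw w : homog (size w) (homw phi w).
Proof.
by elim: w => [|x w IH]; [exact: (homog_mono [::]) | exact: homog_ncmul (homog_phi x) IH].
Qed.

Lemma homw1 x : homw phi [:: x] =1 phi x.
Proof. exact: ncmul1r. Qed.

Lemma homw2 x1 x2 y1 y2 : homw phi [:: x1; x2] [:: y1; y2] = coef1 x1 y1 * coef1 x2 y2.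
Proof.
rewrite /= (eq_ncmul (frefl _) (ncmul1r _)) /ncmul !big_ord_recl big_ord0 /=.
by rewrite [phi x1 [::]]homog_phi // [phi x1 [:: _; _]]homog_phi // !mul0r add0r !addr0.
Qed.

Lemma homw1_lin1 w y : homw phi w [:: y] = lin1 (fun x => mono F w [:: x]) y.
Proof.
have [w1|w1] := eqVneq (size w) 1%N.
  case: w w1 => [|x0 []] // _; rewrite homw1 /lin1 -[phi x0 _](sum_mul_delta (coef1^~ y) x0).
  by apply: eq_bigr => x _; rewrite mulrC /mono /delta eqseq_cons andbT.
rewrite homog_homw 1?eq_sym // /lin1 big1 // => x _.
by rewrite homog_mono ?mul0r // eq_sym.
Qed.

Lemma homp_lin1 p y : homp phi p [:: y] = lin1 (fun x => fval p [:: x]) y.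
Proof.
rewrite /homp /lin1 /fval; under eq_bigr do rewrite homw1_lin1 /lin1 mulr_sumr.
rewrite exchange_big; apply: eq_bigr => x _; rewrite mulr_suml.
by apply: eq_bigr => cw _; rewrite mulrA.
Qed.

Lemma lin1_onto y0 : exists a, forall y, lin1 a y = delta y0 y.
Proof.
case: GI => _ _ _ onto; have [p hp] := onto [:: (1, [:: y0])].
have [low _] := ideal_BRel_low_quad hp.
exists (fun x => fval p [:: x]) => y; rewrite -homp_lin1.
move: (low [:: y] isT) => /eqP; rewrite subr_eq0 => /eqP <-.
by rewrite /fval big_cons big_nil addr0 mul1r /mono /delta eqseq_cons andbT.
Qed.

Lemma lin1_inj a : (forall y, lin1 a y = 0) -> forall x, a x = 0.
Proof.
move=> a0; pose p : fpoly F X := [seq (a x, [:: x]) | x <- index_enum X].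
have homp0 t : homp phi p t = 0.
  rewrite /homp big_map; under eq_bigr do rewrite homw1.
  case: t => [|y [|y' t]]; last 2 first.
  - exact: a0.
  - by rewrite big1 // => x _; rewrite homog_phi ?mulr0.
  by rewrite big1 // => x _; rewrite homog_phi ?mulr0.
case: GI => _ _ back _.
have [low _] := ideal_BRel_low_quad (back p (idealE (fun t => esym (homp0 t)) (ideal0 _))).
move=> x; rewrite -(low [:: x] isT) /fval big_map -(sum_mul_delta a x).
by apply: eq_bigr => x' _; rewrite /mono /delta eqseq_cons andbT eq_sym.
Qed.

Definition tensp a b : fpoly F X :=
  [seq (a xy.1 * b xy.2, [:: xy.1; xy.2])
    | xy <- [seq (x, x') | x <- index_enum X, x' <- index_enum X]].

Lemma big_tensp a b (G : F -> seq X -> F) :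
  \sum_(cw <- tensp a b) G cw.1 cw.2 = \sum_x \sum_x' G (a x * b x') [:: x; x'].
Proof. by rewrite big_map big_allpairs. Qed.

Lemma fval_tensp a b : fval (tensp a b) =1 tens a b.
Proof.
move=> s; rewrite (homog2_expand (homog_tens a b)) /fval.
rewrite (big_tensp a b (fun c w => c * mono F w s)).
by apply: eq_bigr => x _; apply: eq_bigr.
Qed.

Lemma homp_tensp a b : homp phi (tensp a b) =1 tens (lin1 a) (lin1 b).
Proof.
move=> s; rewrite /homp (big_tensp a b (fun c w => c * homw phi w s)).
have [s2|s2] := eqVneq (size s) 2%N; last first.
  rewrite homog_tens // big1 // => x _; rewrite big1 // => x' _.
  by rewrite homog_homw ?mulr0.
case: s s2 => [|y1 [|y2 []]] // _; rewrite [tens _ _ _]/= /lin1 mulr_suml; apply: eq_bigr => x _.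
rewrite mulr_sumr; apply: eq_bigr => x' _; rewrite homw2.
by rewrite -!mulrA; congr (_ * _); rewrite mulrCA.
Qed.

Lemma rel_quad_lin1 a b :
  rel_quad EY rkY (tens (lin1 a) (lin1 b)) <-> rel_quad EX rkX (tens a b).
Proof.
case: GI => _ forth back _; split=> h.
  have hY := idealE (fun s => esym (homp_tensp a b s)) (rel_quad_ideal (homog_tens _ _) h).
  have [_ q] := ideal_BRel_low_quad (back _ hY).
  exact: eq_rel_quad (fval_tensp a b) q.
have hX := idealE (fun s => esym (fval_tensp a b s)) (rel_quad_ideal (homog_tens _ _) h).
have [_ q] := ideal_BRel_low_quad (forth _ hX).
exact: eq_rel_quad (homp_tensp a b) q.
Qed.

Lemma lin1_delta x0 : lin1 (delta x0) =1 coef1 x0.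
Proof.
move=> y; rewrite /lin1 -(sum_mul_delta (coef1^~ y) x0).
by apply: eq_bigr => x _; rewrite mulrC.
Qed.

Lemma lin1_restrict k a y :
  lin1 (fun x => if rkX x == k then a x else 0) y = if rkY y == k then lin1 a y else 0.
Proof.
have [ry|ry] := eqVneq (rkY y) k; last first.
  rewrite /lin1 big1 // => x _; case: eqP => [rx|_]; last exact: mul0r.
  by have [->|/coef1_rank ryx] := eqVneq (coef1 x y) 0; [rewrite mulr0 | rewrite ryx rx eqxx in ry].
apply: eq_bigr => x _; case: eqP => // rx.
by have [->|/coef1_rank ryx] := eqVneq (coef1 x y) 0; [rewrite !mulr0 | case: rx; rewrite -ryx].
Qed.

Lemma coef1_row_nz x : exists y, coef1 x y != 0.
Proof.
apply/existsP; apply: contraT; rewrite negb_exists => /forallP row0.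
have lin0 y : lin1 (delta x) y = 0 by rewrite lin1_delta; apply/eqP/negPn.
by have := lin1_inj lin0 x; rewrite delta_id => /eqP; rewrite oner_eq0.
Qed.

Lemma coef1_col_nz y : exists x, coef1 x y != 0.
Proof.
have [a ha] := lin1_onto y; apply/existsP; apply: contraT; rewrite negb_exists => /forallP col0.
have := ha y; rewrite delta_id /lin1 big1 => [/eqP|x _]; first by rewrite eq_sym oner_eq0.
by move/negPn/eqP: (col0 x) ->; rewrite mulr0.
Qed.

End DegreeOne.

Section HasseCorrespondence.
Variables (F : fieldType) (X Y : finType).
Variables (EX : rel X) (rkX : X -> nat) (EY : rel Y) (rkY : Y -> nat).
Variable phi : X -> seq Y -> F.
Hypothesis GI : graded_iso EX rkX EY rkY phi.
Hypothesis two_lower : forall v, (2 <= rkX v)%N ->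
  exists w1 w2, [/\ w1 != w2, EX v w1 & EX v w2].
Hypothesis lower_pair_uniq : forall v v' w1 w2,
  w1 != w2 -> EX v w1 -> EX v w2 -> EX v' w1 -> EX v' w2 -> v = v'.
Hypothesis EX_rank : forall v w, EX v w -> rkX v = (rkX w).+1.
Hypothesis EY_rank : forall u u', EY u u' -> rkY u = (rkY u').+1.

Local Notation coef1 := (coef1 phi).
Local Notation lin1 := (lin1 phi).
Local Notation rel_quad_lin1 := (rel_quad_lin1 GI).

Lemma other_lower v w : (2 <= rkX v)%N -> exists2 w', EX v w' & w' != w.
Proof.
move=> /two_lower [w1 [w2 [n12 e1 e2]]].
by have [<-|] := eqVneq w1 w; [exists w2; rewrite // eq_sym | exists w1].
Qed.

Lemma rel_quad_delta_out v w :
  ~~ EX v w -> rel_quad EX rkX (tens (delta v : X -> F) (delta w)).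
Proof.
move=> nE; apply/rel_quad_tens => x; have [-> _|nx] := eqVneq x v; last by rewrite delta_neq ?eqxx.
by apply: rel_row_out => w' e; apply: delta_neq; apply: contraNneq nE => <-.
Qed.

Lemma lin1_delta_supp a v0 u v :
  (2 <= rkX v0)%N -> coef1 v0 u != 0 -> lin1 a =1 delta u ->
  (2 <= rkX v)%N -> v != v0 -> a v = 0.
Proof.
move=> hv0 hu ha hv nv.
have [w [w' [ew ew' nw nE]]] : exists w w', [/\ EX v w, EX v w', w' != w & ~~ EX v0 w].
  have [w1 [w2 [n12 e1 e2]]] := two_lower hv.
  case E1: (EX v0 w1); last by exists w1, w2; split; rewrite ?E1 // eq_sym.
  case E2: (EX v0 w2); last by exists w2, w1; split; rewrite ?E2.
  by case/eqP: nv; apply: lower_pair_uniq n12 e1 e2 E1 E2.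
have /rel_quad_lin1/rel_quad_tens/(_ u) := rel_quad_delta_out nE.
rewrite lin1_delta => /(_ hu) row_u.
have /rel_quad_lin1/rel_quad_tens/(_ v) row_v : rel_quad EY rkY (tens (lin1 a) (lin1 (delta w))).
  apply/rel_quad_tens => y; rewrite ha.
  have [-> _|ny] := eqVneq y u; last by rewrite delta_neq ?eqxx.
  by apply: eq_rel_row row_u => y'; rewrite lin1_delta.
apply/eqP; apply: contraT => /row_v [hc _].
by have := hc _ _ ew' ew; rewrite delta_id delta_neq // => /eqP; rewrite eq_sym oner_eq0.
Qed.

Lemma coef1_row_single v u :
  (2 <= rkX v)%N -> coef1 v u != 0 -> forall y, y != u -> coef1 v y = 0.
Proof.
move=> hv hu; have [a ha] := lin1_onto GI u.
(* Restricted to rank |v|, the preimage [a] of [delta u] is supported on v alone. *)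
pose a' x := if rkX x == rkX v then a x else 0.
have ha' : lin1 a' =1 delta u.
  move=> y; rewrite (lin1_restrict GI); case: eqP => [_|ry]; first exact: ha.
  by rewrite delta_neq //; apply/eqP => yu; apply: ry; rewrite yu (coef1_rank GI hu).
have a'0 x : x != v -> a' x = 0.
  move=> nx; have [rx|] := eqVneq (rkX x) (rkX v); last by rewrite /a' => /negbTE ->.
  by apply: (lin1_delta_supp hv hu ha'); rewrite // rx.
have lin_a' y : lin1 a' y = a' v * coef1 v y.
  by rewrite /lin1 (bigD1 v) //= big1 ?addr0 // => x /a'0 ->; rewrite mul0r.
have av : a' v != 0.
  apply/eqP => av0; have := ha' u; rewrite lin_a' av0 mul0r delta_id => /eqP.
  by rewrite eq_sym oner_eq0.
move=> y ny; have := ha' y; rewrite lin_a' delta_neq // => /eqP.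
by rewrite mulf_eq0 (negbTE av) => /eqP.
Qed.

Lemma coef1_row_uniq v u u' :
  (2 <= rkX v)%N -> coef1 v u != 0 -> coef1 v u' != 0 -> u = u'.
Proof. by move=> hv hu; apply: contraNeq => nu; rewrite (coef1_row_single hv hu) // eq_sym. Qed.

Lemma coef1_col_uniq v v' u : (2 <= rkX v)%N -> (2 <= rkX v')%N ->
  coef1 v u != 0 -> coef1 v' u != 0 -> v = v'.
Proof.
move=> hv hv' hu hu'; apply/eqP; apply: contraT => nv.
pose a x := coef1 v' u * delta v x - coef1 v u * delta v' x.
have a0 y : lin1 a y = 0.
  rewrite /lin1 (eq_bigr (fun x => coef1 v' u * (delta v x * coef1 x y)
                                - coef1 v u * (delta v' x * coef1 x y))) => [|x _]; last first.
    by rewrite mulrBl !mulrA.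
  rewrite sumrB -!mulr_sumr -!/(lin1 _ y) !lin1_delta.
  have [->|ny] := eqVneq y u; first by rewrite mulrC subrr.
  by rewrite (coef1_row_single hv hu ny) (coef1_row_single hv' hu' ny) !mulr0 subrr.
have := lin1_inj GI a0 v; rewrite /a delta_id (delta_neq nv) mulr1 mulr0 subr0.
by move/eqP; rewrite (negbTE hu').
Qed.

Lemma coef1_cover v w u u' : (2 <= rkX v)%N -> (2 <= rkX w)%N ->
  coef1 v u != 0 -> coef1 w u' != 0 -> EX v w -> EY u u'.
Proof.
move=> hv hw hu hu' e; apply: contraT => nE.
have /rel_quad_lin1/rel_quad_tens/(_ v) : rel_quad EY rkY (tens (lin1 (delta v)) (lin1 (delta w))).
  apply/rel_quad_tens => y; rewrite lin1_delta => hy.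
  have -> : y = u by apply: contraNeq hy => /(coef1_row_single hv hu) ->.
  apply: rel_row_out => y' e'; rewrite lin1_delta; apply: (coef1_row_single hw hu').
  by apply: contraNneq nE => <-.
rewrite delta_id => /(_ (oner_neq0 _)) [hc _].
have [w' ew' nw'] := other_lower w hv.
by have := hc _ _ e ew'; rewrite delta_id delta_neq // => /eqP; rewrite oner_eq0.
Qed.

Lemma coef1_cover_inv v w u u' : (2 <= rkX v)%N -> (2 <= rkX w)%N ->
  coef1 v u != 0 -> coef1 w u' != 0 -> EY u u' -> EX v w.
Proof.
move=> hv hw hu hu' e; apply: contraT => nE.
have /rel_quad_lin1/rel_quad_tens/(_ u) := rel_quad_delta_out nE.
rewrite lin1_delta => /(_ hu) [hc _].
have [w'' ew'' nw] := other_lower w hv.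
have hw'' : (2 <= rkX w'')%N.
  have := EX_rank ew''; have := EY_rank e; have := coef1_rank GI hu; have := coef1_rank GI hu'.
  by lia.
have [u'' hu''] := coef1_row_nz GI w''.
have nu : u'' != u'.
  by apply: contraNneq nw => eu; apply/eqP/(coef1_col_uniq hw'' hw hu''); rewrite eu.
have := hc _ _ e (coef1_cover hv hw'' hu hu'' ew''); rewrite !lin1_delta.
by rewrite (coef1_row_single hw hu' nu) => /eqP; rewrite (negbTE hu').
Qed.

End HasseCorrespondence.

Section Covers.
Context {d : Order.disp_t} {T : finPOrderType d}.
Local Open Scope order_scope.

Lemma below_cover (z v : T) : z < v -> exists2 c, covers v c & z <= c.
Proof.
move=> zv; pose down t := #|[set u : T | u <= t]|.
have Pz : (z <= z) && (z < v) by rewrite lexx zv.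
have [c /andP[zc cv] cmax] := @arg_maxnP _ z (fun t => (z <= t) && (t < v)) down Pz.
exists c => //; apply/andP; split=> //; apply/forallP => t; apply/negP => /andP[ct tv].
have := cmax t; rewrite (le_trans zc (ltW ct)) tv => /(_ isT); apply/negP.
rewrite -ltnNge; apply: proper_card; apply/properP; split.
  by apply/subsetP => u; rewrite !inE => /le_trans; apply; apply: ltW.
by exists t; rewrite !inE ?lexx // lt_geF.
Qed.

Variable r : T -> nat.
Hypothesis r_cover : forall x y : T, covers x y -> r x = (r y).+1.

Lemma rank_le x y : x <= y -> (r x <= r y)%N.
Proof.
have [n] := ubnP (r y); elim: n y => // n IH y ry xy.
have [->//|nxy] := eqVneq x y.
have [c cy xc] : exists2 c, covers y c & x <= c by apply: below_cover; rewrite lt_neqAle nxy.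
by rewrite (r_cover cy) in ry *; apply/leqW/IH.
Qed.

End Covers.

Section GeTwoMaps.
Context {dP dQ : Order.disp_t} {P : finPOrderType dP} {Q : finPOrderType dQ}.
Variables (rP : P -> nat) (rQ : Q -> nat).
Hypothesis rP_cover : forall x y : P, covers x y -> rP x = (rP y).+1.
Local Open Scope order_scope.

Lemma ge2_homo_le (f : {x : P | (2 <= rP x)%N} -> {y : Q | (2 <= rQ y)%N}) :
  (forall x y, covers (val x) (val y) -> covers (val (f x)) (val (f y))) ->
  forall x y, val x <= val y -> val (f x) <= val (f y).
Proof.
move=> fc x y; have [n] := ubnP (rP (val y)); elim: n y => // n IH y ry xy.
have [/val_inj->//|nxy] := eqVneq (val x) (val y).
have [c cy xc] : exists2 c, covers (val y) c & val x <= c.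
  by apply: below_cover; rewrite lt_neqAle nxy.
have c2 : (2 <= rP c)%N by apply: leq_trans (valP x) (rank_le rP_cover xc).
have /andP[fcy _] := fc y (exist _ c c2) cy.
apply: le_trans (ltW fcy); apply: (IH (exist _ c c2) _ xc).
by move: ry; rewrite (rP_cover cy) ltnS.
Qed.

End GeTwoMaps.

Lemma ge2_iso_of_covers {dP dQ : Order.disp_t} (P : finPOrderType dP) (Q : finPOrderType dQ)
    (rP : P -> nat) (rQ : Q -> nat)
    (f : {x : P | (2 <= rP x)%N} -> {y : Q | (2 <= rQ y)%N})
    (g : {y : Q | (2 <= rQ y)%N} -> {x : P | (2 <= rP x)%N}) :
  (forall x y : P, covers x y -> rP x = (rP y).+1) ->
  (forall x y : Q, covers x y -> rQ x = (rQ y).+1) ->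
  cancel f g -> cancel g f ->
  (forall x y, covers (val x) (val y) -> covers (val (f x)) (val (f y))) ->
  (forall x y, covers (val x) (val y) -> covers (val (g x)) (val (g y))) ->
  ge2_iso rP rQ.
Proof.
move=> rP_cover rQ_cover fK gK fc gc; exists f; split; first by exists g.
move=> x y; apply/idP/idP; first exact: ge2_homo_le.
by move/(ge2_homo_le rQ_cover gc); rewrite !fK.
Qed.

Definition Vplus_of_ge2 {d : Order.disp_t} {P : finPOrderType d} (r : P -> nat)
  (x : {x : P | (2 <= r x)%N}) : Vplus r := exist _ (val x) (ltnW (valP x)).

Section HasseMatching.
Context {dP dQ : Order.disp_t} {P : finPOrderType dP} {Q : finPOrderType dQ}.
Variables (rP : P -> nat) (rQ : Q -> nat).
Hypothesis rP_cover : forall x y : P, covers x y -> rP x = (rP y).+1.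
Hypothesis rQ_cover : forall x y : Q, covers x y -> rQ x = (rQ y).+1.
Variable R : Vplus rP -> Vplus rQ -> bool.
Hypothesis R_total : forall v, exists u, R v u.
Hypothesis R_onto : forall u, exists v, R v u.
Hypothesis R_rank : forall v u, R v u -> hasseRk rQ u = hasseRk rP v.
Hypothesis R_fun : forall v u u', R v u -> R v u' -> (2 <= hasseRk rP v)%N -> u = u'.
Hypothesis R_inj : forall v v' u, R v u -> R v' u ->
  (2 <= hasseRk rP v)%N -> (2 <= hasseRk rP v')%N -> v = v'.
Hypothesis R_cover : forall v v' u u', R v u -> R v' u' ->
  (2 <= hasseRk rP v)%N -> (2 <= hasseRk rP v')%N -> hasseE rP v v' -> hasseE rQ u u'.
Hypothesis R_cover_inv : forall v v' u u', R v u -> R v' u' ->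
  (2 <= hasseRk rP v)%N -> (2 <= hasseRk rP v')%N -> hasseE rQ u u' -> hasseE rP v v'.

Local Notation toP := (@Vplus_of_ge2 _ _ rP).
Local Notation toQ := (@Vplus_of_ge2 _ _ rQ).

Lemma ge2_iso_of_hasse_matching : ge2_iso rP rQ.
Proof.
have exf x : exists y, R (toP x) (toQ y).
  have [u ru] := R_total (toP x).
  have u2 : (2 <= hasseRk rQ u)%N by rewrite (R_rank ru); apply: valP x.
  by exists (exist _ (val u) u2); rewrite (_ : toQ _ = u) //; apply: val_inj.
have exg y : exists x, R (toP x) (toQ y).
  have [v rv] := R_onto (toQ y).
  have v2 : (2 <= hasseRk rP v)%N by rewrite -(R_rank rv); apply: valP y.
  by exists (exist _ (val v) v2); rewrite (_ : toP _ = v) //; apply: val_inj.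
pose f x := xchoose (exf x); pose g y := xchoose (exg y).
have fK : cancel f g.
  move=> x; apply: val_inj.
  have := R_inj (xchooseP (exg (f x))) (xchooseP (exf x)) (valP (g (f x))) (valP x).
  by move/(congr1 val).
have gK : cancel g f.
  move=> y; apply: val_inj.
  by have /(congr1 val) := R_fun (xchooseP (exf (g y))) (xchooseP (exg y)) (valP (g y)).
apply: (ge2_iso_of_covers rP_cover rQ_cover fK gK) => x x'.
  exact: R_cover (xchooseP (exf x)) (xchooseP (exf x')) (valP x) (valP x').
exact: R_cover_inv (xchooseP (exg x)) (xchooseP (exg x')) (valP (g x)) (valP (g x')).
Qed.

End HasseMatching.

Section AtomicLattice.
Context {d : Order.disp_t} {L : finTBLatticeType d}.
Local Open Scope order_scope.

Lemma covers_join (u w1 w2 : L) : w1 != w2 -> covers u w1 -> covers u w2 -> u = w1 `|` w2.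
Proof.
move=> ne /andP[l1 /forallP n1] /andP[l2 /forallP n2].
have h1 : w1 < w1 `|` w2.
  rewrite lt_neqAle leUl andbT; apply/eqP => e1.
  have lt21 : w2 < w1 by rewrite lt_neqAle eq_sym ne e1 leUr.
  by have := n2 w1; rewrite lt21 l1.
have : w1 `|` w2 <= u by rewrite leUx !ltW.
rewrite le_eqVlt => /orP[/eqP->//|ltj].
by have := n1 (w1 `|` w2); rewrite h1 ltj.
Qed.

Lemma lower_covers_uniq (v v' w1 w2 : L) : w1 != w2 ->
  covers v w1 -> covers v w2 -> covers v' w1 -> covers v' w2 -> v = v'.
Proof. by move=> ne c1 c2 c1' c2'; rewrite (covers_join ne c1 c2) (covers_join ne c1' c2'). Qed.

Variable r : L -> nat.
Hypotheses (r_rank : is_rank r) (L_atomic : atomic L).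

Lemma two_lower_covers x : (2 <= r x)%N ->
  exists w1 w2, [/\ w1 != w2, covers x w1 & covers x w2].
Proof.
move=> hx; have r0 : r \bot = 0%N by apply/r_rank.2 => y; rewrite lex0 => /eqP.
have [c cc _] : exists2 c, covers x c & \bot <= c.
  by apply: below_cover; rewrite lt0x; apply: contraTneq hx => ->; rewrite r0.
case: (pickP (fun w => covers x w && (w != c))) => [w /andP[cw nw]|none].
  by exists w, c.
suff : x <= c by have /andP[cx _] := cc; rewrite lt_geF.
rewrite [x]L_atomic; apply/joinsP => a /andP[ha ax].
have ra : r a = 1%N by rewrite (r_rank.1 _ _ ha) r0.
have [c' cc' ac'] : exists2 c', covers x c' & a <= c'.
  by apply: below_cover; rewrite lt_neqAle ax andbT; apply: contraTneq hx => <-; rewrite ra.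
by move: (none c'); rewrite cc' /= => /negbFE/eqP <-.
Qed.

End AtomicLattice.

Lemma hasse_two_lower {d : Order.disp_t} (P : finTBLatticeType d) (r : P -> nat) :
  atomic P -> is_rank r -> forall v : Vplus r, (2 <= hasseRk r v)%N ->
  exists w1 w2, [/\ w1 != w2, hasseE r v w1 & hasseE r v w2].
Proof.
move=> atP rk v hv; have [w1 [w2 [n12 c1 c2]]] := two_lower_covers rk atP hv.
have pos w : covers (val v) w -> (0 < r w)%N.
  by move=> /rk.1 e; move: hv; rewrite /hasseRk e ltnS.
by exists (exist _ w1 (pos _ c1)), (exist _ w2 (pos _ c2)).
Qed.

Lemma hasse_lower_uniq {d : Order.disp_t} (P : finTBLatticeType d) (r : P -> nat)
    (v v' w1 w2 : Vplus r) : w1 != w2 ->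
  hasseE r v w1 -> hasseE r v w2 -> hasseE r v' w1 -> hasseE r v' w2 -> v = v'.
Proof. by move=> ne c1 c2 c1' c2'; apply: val_inj; apply: lower_covers_uniq ne c1 c2 c1' c2'. Qed.

Theorem mainTheorem16 (F : fieldType)
    (dP : Order.disp_t) (P : finTBLatticeType dP) (rP : P -> nat)
    (dQ : Order.disp_t) (Q : finPOrderType dQ) (rQ : Q -> nat) :
  atomic P -> is_rank rP -> uniform rP ->
  is_rank rQ -> @unique_minimal _ Q ->
  simB F rQ rP ->
  ge2_iso rP rQ.
Proof.
move=> atomicP rankP _ rankQ _ [phi GI].
have two_lower := hasse_two_lower atomicP rankP.
have lower_uniq := @hasse_lower_uniq _ P rP.
have EP_rank (v w : Vplus rP) : hasseE rP v w -> hasseRk rP v = (hasseRk rP w).+1.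
  exact: rankP.1.
have EQ_rank (u u' : Vplus rQ) : hasseE rQ u u' -> hasseRk rQ u = (hasseRk rQ u').+1.
  exact: rankQ.1.
apply: (ge2_iso_of_hasse_matching rankP.1 rankQ.1 (R := fun v u => coef1 phi v u != 0)).
- exact: coef1_row_nz GI.
- exact: coef1_col_nz GI.
- exact: coef1_rank GI.
- move=> v u u' hu hu' hv; exact: (coef1_row_uniq GI two_lower lower_uniq hv hu hu').
- move=> v v' u hu hu' hv hv'; exact: (coef1_col_uniq GI two_lower lower_uniq hv hv' hu hu').
- move=> v v' u u' hu hu' hv hv'; exact: (coef1_cover GI two_lower lower_uniq hv hv' hu hu').
- move=> v v' u u' hu hu' hv hv'.
  exact: (coef1_cover_inv GI two_lower lower_uniq EP_rank EQ_rank hv hv' hu hu').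
Qed.
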